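(* Let $(X,u)$ and $(Y,v)$ be Čech closure spaces, let $Y^X$ be the set of all continuous maps $(X,u)\to(Y,v)$, and let $\sigma$ be a Čech closure operator on $Y^X$. Then $\sigma$ is proper if and only if every net in $Y^X$ that converges continuously to some $f\in Y^X$ also converges to $f$ in $(Y^X,\sigma)$; and $\sigma$ is admissible if and only if every net in $Y^X$ that converges to some $f$ in $(Y^X,\sigma)$ converges continuously to $f$.
   Context: A Čech closure space $(X,u)$ is a set $X$ with an operator $u:\mathcal P(X)\to\mathcal P(X)$ satisfying $u(\emptyset)=\emptyset$, $A\subset u(A)$, and $u(A\cup B)=u(A)\cup u(B)$. The interior is $\mathrm{int}_u A=X\setminus u(X\setminus A)$; $U$ is a neighbourhood of $x$ if $x\in\mathrm{int}_uU$. A map $f:(X,u)\to(Y,v)$ is continuous if $f(u(A))\subset v(f(A))$ for all $A$. A net converges to a point if it is eventually in every neighbourhood of that point. A net $(f_\lambda)_{\lambda\in\Lambda}$ in $Y^X$ converges continuously to $f\in Y^X$ if, whenever a net $(x_\mu)_{\mu\in M}$ converges to $x$ in $(X,u)$, the net $(f_\lambda(x_\mu))_{(\lambda,\mu)\in\Lambda\times M}$ (coordinatewise order) converges to $f(x)$ in $(Y,v)$. The product $(Z,w)\times(X,u)$ is $Z\times X$ with the closure operator for which the sets $W\times U$ ($W$ a neighbourhood of $z$, $U$ of $x$) form a neighbourhood base at $(z,x)$. For $g:Z\times X\to Y$, $g^*(z)(x)=g(z,x)$. A closure operator $\sigma$ on $Y^X$ is proper if for every closure space $(Z,w)$, continuity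 of $g:(Z,w)\times(X,u)\to(Y,v)$ implies continuity of $g^*:(Z,w)\to(Y^X,\sigma)$; it is admissible if for every closure space $(Z,w)$ and every $g:Z\times X\to Y$ with $g^*(Z)\subset Y^X$, continuity of $g^*:(Z,w)\to(Y^X,\sigma)$ implies continuity of $g$. *)

Set Implicit Arguments.

Definition set (T : Type) := T -> Prop.
Definition set0 {T : Type} : set T := fun _ => False.
Definition setU {T : Type} (A B : set T) : set T := fun x => A x \/ B x.
Definition setC {T : Type} (A : set T) : set T := fun x => ~ A x.
Definition subset {T : Type} (A B : set T) : Prop := forall x, A x -> B x.
Definition image {T U : Type} (f : T -> U) (A : set T) : set U :=
  fun y => exists x, A x /\ f x = y.

Record closure_op (X : Type) (u : set X -> set X) : Prop := {
  cl_empty : u set0 = set0;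
  cl_ext : forall A, subset A (u A);
  cl_union : forall A B, u (setU A B) = setU (u A) (u B) }.

Definition interior {X : Type} (u : set X -> set X) (A : set X) : set X :=
  setC (u (setC A)).

Definition nbhd {X : Type} (u : set X -> set X) (x : X) (U : set X) : Prop :=
  interior u U x.

Definition ccontinuous {X Y : Type} (u : set X -> set X) (v : set Y -> set Y)
  (f : X -> Y) : Prop := forall A, subset (image f (u A)) (v (image f A)).

Definition cmap {X Y : Type} (u : set X -> set X) (v : set Y -> set Y) :=
  { f : X -> Y | ccontinuous u v f }.

Record directed (L : Type) (le : L -> L -> Prop) : Prop := {
  dir_refl : forall a, le a a;
  dir_trans : forall a b c, le a b -> le b c -> le a c;
  dir_inhabited : inhabited L;
  dir_upper : forall a b, exists c, le a c /\ le b c }.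

Definition net_conv {X : Type} (u : set X -> set X) {L : Type}
  (le : L -> L -> Prop) (s : L -> X) (x : X) : Prop :=
  forall U, nbhd u x U -> exists l0, forall l, le l0 l -> U (s l).

Definition prod_le {L M : Type} (le : L -> L -> Prop) (leM : M -> M -> Prop)
  (p q : L * M) : Prop := le (fst p) (fst q) /\ leM (snd p) (snd q).

Definition cont_conv {X Y : Type} (u : set X -> set X) (v : set Y -> set Y)
  {L : Type} (le : L -> L -> Prop) (s : L -> cmap u v) (f : cmap u v) : Prop :=
  forall (M : Type) (leM : M -> M -> Prop), directed leM ->
  forall (xs : M -> X) (x : X), net_conv u leM xs x ->
    net_conv v (prod_le le leM) (fun p => proj1_sig (s (fst p)) (xs (snd p)))
      (proj1_sig f x).

(* product closure: the sets W x U (W nbhd of z, U nbhd of x) form a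
   neighbourhood base at (z,x) *)
Definition prod_cl {Z X : Type} (w : set Z -> set Z) (u : set X -> set X)
  (A : set (Z * X)) : set (Z * X) :=
  fun p => forall W U, nbhd w (fst p) W -> nbhd u (snd p) U ->
    exists q, A q /\ W (fst q) /\ U (snd q).

(* proper: continuity of g on Z x X implies continuity of g^* : Z -> Y^X.
   G : Z -> Y^X is g^* (G z) x = g (z, x). *)
Definition proper {X Y : Type} (u : set X -> set X) (v : set Y -> set Y)
  (sigma : set (cmap u v) -> set (cmap u v)) : Prop :=
  forall (Z : Type) (w : set Z -> set Z), closure_op w ->
  forall (g : Z * X -> Y) (G : Z -> cmap u v),
    (forall z x, proj1_sig (G z) x = g (z, x)) ->
    ccontinuous (prod_cl w u) v g -> ccontinuous w sigma G.

Definition admissible {X Y : Type} (u : set X -> set X) (v : set Y -> set Y)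
  (sigma : set (cmap u v) -> set (cmap u v)) : Prop :=
  forall (Z : Type) (w : set Z -> set Z), closure_op w ->
  forall (g : Z * X -> Y) (G : Z -> cmap u v),
    (forall z x, proj1_sig (G z) x = g (z, x)) ->
    ccontinuous w sigma G -> ccontinuous (prod_cl w u) v g.
Arguments proper {X Y} u v sigma.
Arguments admissible {X Y} u v sigma.
Arguments cont_conv {X Y} u v {L} le s f.
Arguments net_conv {X} u {L} le s x.

(* Closures in a Cech closure space are detected by nets: x lies in u A iff
   some net in A, indexed by the neighbourhoods of x, converges to x; hence a
   map is continuous iff it preserves convergence of nets.  A net (s_l) with
   limit s_oo is the same as a map on L + {oo} continuous at oo, for the
   closure whose neighbourhoods of oo are the sets containing a tail of L.
   Taking Z = L + {oo} in the definitions, continuous convergence of (s_l)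
   makes the evaluation map on Z x X continuous and convergence in sigma makes
   Z -> Y^X continuous, which gives the "only if" parts.  Conversely, the
   continuity of g^* and of g is tested on nets in Z and in Z x X, to which
   the hypotheses on sigma apply directly (for Z x X through the diagonal of
   the doubly indexed net). *)

From Stdlib Require Import Classical FunctionalExtensionality PropExtensionality ClassicalEpsilon.

Definition eventually {L : Type} (le : L -> L -> Prop) (P : L -> Prop) : Prop :=
  exists l0, forall l, le l0 l -> P l.

Definition frequently {L : Type} (le : L -> L -> Prop) (P : L -> Prop) : Prop :=
  forall l0, exists l, le l0 l /\ P l.

Section DirectedSets.
Context {L : Type} {le : L -> L -> Prop}.

Lemma eventually_and (hd : directed le) {P Q : L -> Prop} :
  eventually le P -> eventually le Q -> eventually le (fun l => P l /\ Q l).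
Proof.
  intros [a ha] [b hb]. destruct (dir_upper hd a b) as [c [hac hbc]].
  exists c; intros l hcl; split; [apply ha | apply hb]; eapply dir_trans; eauto.
Qed.

Lemma frequently_eventually {P Q : L -> Prop} :
  frequently le P -> eventually le Q -> exists l, P l /\ Q l.
Proof. intros hP [l0 hQ]. destruct (hP l0) as [l [hl hPl]]. eauto. Qed.

Lemma not_frequently {P : L -> Prop} :
  ~ frequently le P -> eventually le (fun l => ~ P l).
Proof.
  intros hP. apply NNPP; intros hev. apply hP; intros l0.
  apply NNPP; intros hno. apply hev. exists l0; intros l hl hPl. eauto.
Qed.

Lemma frequently_or (hd : directed le) {P Q : L -> Prop} :
  frequently le (fun l => P l \/ Q l) -> frequently le P \/ frequently le Q.
Proof.
  intros hPQ. apply NNPP; intros hno. apply not_or_and in hno as [hP hQ].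
  destruct (frequently_eventually hPQ
              (eventually_and hd (not_frequently hP) (not_frequently hQ)))
    as [l [[hPl | hQl] [hnP hnQ]]]; auto.
Qed.

End DirectedSets.

Definition nbhds {X : Type} (u : set X -> set X) (x : X) : Type :=
  { U : set X | nbhd u x U }.

Definition nbhds_le {X : Type} (u : set X -> set X) (x : X) (U V : nbhds u x) : Prop :=
  subset (proj1_sig V) (proj1_sig U).
Arguments nbhds_le {X} u x U V.

Section ClosureSpace.
Context {X : Type} {u : set X -> set X} (hu : closure_op u).

Lemma cl_mono (A B : set X) : subset A B -> subset (u A) (u B).
Proof.
  intros hAB. replace B with (setU A B).
  - rewrite (cl_union hu). intros x hx; left; exact hx.
  - apply functional_extensionality; intros x; apply propositional_extensionality.
    split; [intros [h | h] | intros h; right]; auto.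
Qed.

Lemma nbhd_mem {x : X} {U : set X} : nbhd u x U -> U x.
Proof. intros hU. apply NNPP; intros hx. exact (hU (cl_ext hu _ _ hx)). Qed.

Lemma nbhd_of_not_cl {B : set X} {x : X} : ~ u B x -> nbhd u x (setC B).
Proof.
  intros hB hx. apply hB. apply (cl_mono (setC (setC B)) B); [|exact hx].
  intros y hy; exact (NNPP _ hy).
Qed.

Lemma nbhd_setT (x : X) : nbhd u x (fun _ => True).
Proof.
  intros hx. assert (h0 : u set0 x).
  { apply (cl_mono (setC (fun _ => True)) set0); [|exact hx]. intros y hy; exact (hy I). }
  rewrite (cl_empty hu) in h0. exact h0.
Qed.

Lemma nbhd_setI {x : X} {U V : set X} :
  nbhd u x U -> nbhd u x V -> nbhd u x (fun y => U y /\ V y).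
Proof.
  intros hU hV hx.
  assert (hUV : u (setU (setC U) (setC V)) x).
  { apply (cl_mono (setC (fun y => U y /\ V y)) _); [|exact hx].
    intros y hy. destruct (classic (U y)); [right | left]; intros hy'; auto. }
  rewrite (cl_union hu) in hUV. destruct hUV; auto.
Qed.

Lemma nbhds_directed (x : X) : directed (nbhds_le u x).
Proof.
  constructor.
  - intros U y hy; exact hy.
  - intros U V W hUV hVW y hy; exact (hUV y (hVW y hy)).
  - exact (inhabits (exist _ _ (nbhd_setT x))).
  - intros [U hU] [V hV]. exists (exist _ _ (nbhd_setI hU hV)).
    split; intros y [hUy hVy]; assumption.
Qed.

Lemma net_conv_cl {L : Type} {le : L -> L -> Prop} {s : L -> X} {x : X} {B : set X} :
  net_conv u le s x -> frequently le (fun l => B (s l)) -> u B x.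
Proof.
  intros hs hB. apply NNPP; intros hx.
  destruct (frequently_eventually hB (hs _ (nbhd_of_not_cl hx))) as [l [hin hout]].
  exact (hout hin).
Qed.

Lemma cl_net {A : set X} {x : X} :
  u A x -> exists s : nbhds u x -> X, (forall U, A (s U)) /\ net_conv u (nbhds_le u x) s x.
Proof.
  intros hx.
  assert (hmeet : forall U : nbhds u x, exists y, proj1_sig U y /\ A y).
  { intros [U hU]; simpl. apply NNPP; intros hno. apply hU.
    apply (cl_mono A _); [|exact hx]. intros y hy hUy. eauto. }
  apply choice in hmeet as [s hs].
  exists s; split.
  - intros U; exact (proj2 (hs U)).
  - intros U hU. exists (exist _ U hU). intros V hV. exact (hV _ (proj1 (hs V))).
Qed.

End ClosureSpace.

Lemma continuous_net_conv {X Y : Type} {u : set X -> set X} {v : set Y -> set Y}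
  (hv : closure_op v) {f : X -> Y} {L : Type} {le : L -> L -> Prop} {s : L -> X} {x : X} :
  ccontinuous u v f -> net_conv u le s x -> net_conv v le (fun l => f (s l)) (f x).
Proof.
  intros hf hs V hV. apply (hs (fun x' => V (f x'))). intros hx. apply hV.
  apply (cl_mono hv (image f (setC (fun y => V (f y)))) (setC V)).
  - intros y [x' [hx' <-]]; exact hx'.
  - apply hf. exists x; split; [exact hx | reflexivity].
Qed.

Lemma continuous_of_net_conv {X Y : Type} {u : set X -> set X} {v : set Y -> set Y}
  (hu : closure_op u) (hv : closure_op v) (f : X -> Y) :
  (forall (L : Type) (le : L -> L -> Prop), directed le -> forall (s : L -> X) (x : X),
     net_conv u le s x -> net_conv v le (fun l => f (s l)) (f x)) ->
  ccontinuous u v f.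
Proof.
  intros hf A y [x [hx <-]].
  destruct (cl_net hu hx) as [s [hsA hs]].
  apply (net_conv_cl hv (hf _ _ (nbhds_directed hu x) s x hs)).
  intros U. exists U; split; [apply dir_refl, (nbhds_directed hu x) | exists (s U); auto].
Qed.

Section Products.
Context {Z X : Type} {w : set Z -> set Z} {u : set X -> set X}.

Lemma nbhd_prod {z : Z} {x : X} {W : set Z} {U : set X} :
  nbhd w z W -> nbhd u x U -> nbhd (prod_cl w u) (z, x) (fun q => W (fst q) /\ U (snd q)).
Proof. intros hW hU hzx. destruct (hzx W U hW hU) as [q [hq [hWq hUq]]]. auto. Qed.

Lemma not_prod_cl {A : set (Z * X)} {p : Z * X} :
  ~ prod_cl w u A p -> exists W U, nbhd w (fst p) W /\ nbhd u (snd p) U /\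
    forall q, W (fst q) -> U (snd q) -> ~ A q.
Proof.
  intros hA. apply NNPP; intros hno. apply hA. intros W U hW hU.
  apply NNPP; intros hmiss. apply hno. exists W, U; repeat split; auto.
  intros q hWq hUq hq. eauto.
Qed.

Lemma prod_cl_closure_op : closure_op w -> closure_op u -> closure_op (prod_cl w u).
Proof.
  intros hw hu. constructor.
  - apply functional_extensionality; intros p; apply propositional_extensionality.
    split; [|intros []].
    intros hp. destruct (hp _ _ (nbhd_setT hw (fst p)) (nbhd_setT hu (snd p)))
      as [q [[] _]].
  - intros A p hp W U hW hU.
    exists p; repeat split; [exact hp | exact (nbhd_mem hw hW) | exact (nbhd_mem hu hU)].
  - intros A B. apply functional_extensionality; intros p; apply propositional_extensionality.
    split.
    + intros hp. apply NNPP; intros hno. apply not_or_and in hno as [hA hB].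
      destruct (not_prod_cl hA) as [W1 [U1 [hW1 [hU1 hA']]]].
      destruct (not_prod_cl hB) as [W2 [U2 [hW2 [hU2 hB']]]].
      destruct (hp _ _ (nbhd_setI hw hW1 hW2) (nbhd_setI hu hU1 hU2))
        as [q [[hq | hq] [[hW1q hW2q] [hU1q hU2q]]]];
        [exact (hA' q hW1q hU1q hq) | exact (hB' q hW2q hU2q hq)].
    + intros [hp | hp] W U hW hU; destruct (hp W U hW hU) as [q [hq hWU]];
        exists q; split; [left | | right |]; auto.
Qed.

Lemma net_conv_pair {L M : Type} {le : L -> L -> Prop} {leM : M -> M -> Prop}
  {zs : L -> Z} {xs : M -> X} {z : Z} {x : X} :
  net_conv w le zs z -> net_conv u leM xs x ->
  net_conv (prod_cl w u) (prod_le le leM) (fun p => (zs (fst p), xs (snd p))) (z, x).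
Proof.
  intros hz hx N hN. destruct (not_prod_cl hN) as [W [U [hW [hU hWU]]]].
  destruct (hz W hW) as [l0 hl0]. destruct (hx U hU) as [m0 hm0].
  exists (l0, m0). intros [l m] [hl hm]. apply NNPP, hWU; [apply hl0 | apply hm0]; assumption.
Qed.

Lemma net_conv_fst (hu : closure_op u) {L : Type} {le : L -> L -> Prop}
  {p : L -> Z * X} {z : Z} {x : X} :
  net_conv (prod_cl w u) le p (z, x) -> net_conv w le (fun l => fst (p l)) z.
Proof.
  intros hp W hW. destruct (hp _ (nbhd_prod hW (nbhd_setT hu x))) as [l0 hl0].
  exists l0; intros l hl; exact (proj1 (hl0 l hl)).
Qed.

Lemma net_conv_snd (hw : closure_op w) {L : Type} {le : L -> L -> Prop}
  {p : L -> Z * X} {z : Z} {x : X} :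
  net_conv (prod_cl w u) le p (z, x) -> net_conv u le (fun l => snd (p l)) x.
Proof.
  intros hp U hU. destruct (hp _ (nbhd_prod (nbhd_setT hw z) hU)) as [l0 hl0].
  exists l0; intros l hl; exact (proj2 (hl0 l hl)).
Qed.

End Products.

Lemma net_conv_diag {Y : Type} {v : set Y -> set Y} {M : Type} {le : M -> M -> Prop}
  {t : M * M -> Y} {y : Y} :
  directed le -> net_conv v (prod_le le le) t y -> net_conv v le (fun m => t (m, m)) y.
Proof.
  intros hd ht V hV. destruct (ht V hV) as [[a b] hab].
  destruct (dir_upper hd a b) as [c [hac hbc]].
  exists c. intros m hcm. apply hab. split; eapply dir_trans; eauto.
Qed.

(* The directed set [L] with a limit point [None] adjoined: the neighbourhoods
   of [None] are the sets containing [None] and a tail of [L], so that the maps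
   on [option L] continuous at [None] are exactly the convergent nets. *)
Definition limit_cl {L : Type} (le : L -> L -> Prop) (A : set (option L)) : set (option L) :=
  fun z => match z with
           | Some l => A (Some l)
           | None => A None \/ frequently le (fun l => A (Some l))
           end.

Definition with_limit {L T : Type} (s : L -> T) (t : T) (z : option L) : T :=
  match z with Some l => s l | None => t end.

Section LimitPoint.
Context {L : Type} {le : L -> L -> Prop}.

Lemma limit_cl_closure_op : directed le -> closure_op (limit_cl le).
Proof.
  intros hd. constructor.
  - apply functional_extensionality; intros [l|]; [reflexivity|].
    apply propositional_extensionality; split; [|intros []].
    intros [[] | hfreq]. destruct (dir_inhabited hd) as [l0].
    destruct (hfreq l0) as [l [_ []]].
  - intros A [l|] hA; simpl; auto.
  - intros A B. apply functional_extensionality; intros [l|]; [reflexivity|].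
    apply propositional_extensionality; unfold setU; simpl; split.
    + intros [[hA | hB] | hfreq]; auto.
      destruct (frequently_or hd hfreq); auto.
    + intros [[hA | hfreq] | [hB | hfreq]]; auto; right; intros l0;
        destruct (hfreq l0) as [l [hl hAB]]; eauto.
Qed.

Lemma nbhd_Some (l : L) : nbhd (limit_cl le) (Some l) (fun z => z = Some l).
Proof. intros hl. exact (hl eq_refl). Qed.

Lemma nbhd_tail (l0 : L) :
  nbhd (limit_cl le) None (fun z => match z with None => True | Some l => le l0 l end).
Proof.
  intros [hNone | hfreq]; [exact (hNone I)|].
  destruct (hfreq l0) as [l [hl hnl]]. exact (hnl hl).
Qed.

Lemma net_conv_Some : net_conv (limit_cl le) le Some None.
Proof.
  intros W hW.
  assert (hrare : ~ frequently le (fun l => ~ W (Some l)))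
    by (intros hfreq; apply hW; right; exact hfreq).
  destruct (not_frequently hrare) as [l0 hl0].
  exists l0; intros l hl. exact (NNPP _ (hl0 l hl)).
Qed.

Lemma limit_cl_continuous_iff {Y : Type} {v : set Y -> set Y} (hv : closure_op v)
  (G : option L -> Y) :
  ccontinuous (limit_cl le) v G <-> net_conv v le (fun l => G (Some l)) (G None).
Proof.
  split.
  - intros hG. exact (continuous_net_conv hv hG net_conv_Some).
  - intros hconv A y [z [hz <-]]. destruct z as [l|]; [|destruct hz as [hNone | hfreq]].
    + apply (cl_ext hv). exists (Some l); auto.
    + apply (cl_ext hv). exists None; auto.
    + apply (net_conv_cl hv hconv). intros l0.
      destruct (hfreq l0) as [l [hl hA]]. exists l; split; [exact hl | exists (Some l); auto].
Qed.

End LimitPoint.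

Definition cont_conv_implies_conv {X Y : Type} (u : set X -> set X) (v : set Y -> set Y)
  (sigma : set (cmap u v) -> set (cmap u v)) : Prop :=
  forall (L : Type) (le : L -> L -> Prop), directed le ->
  forall (s : L -> cmap u v) (f : cmap u v), cont_conv u v le s f -> net_conv sigma le s f.

Definition conv_implies_cont_conv {X Y : Type} (u : set X -> set X) (v : set Y -> set Y)
  (sigma : set (cmap u v) -> set (cmap u v)) : Prop :=
  forall (L : Type) (le : L -> L -> Prop), directed le ->
  forall (s : L -> cmap u v) (f : cmap u v), net_conv sigma le s f -> cont_conv u v le s f.

Section FunctionSpace.
Context {X Y : Type} {u : set X -> set X} {v : set Y -> set Y}
  (hu : closure_op u) (hv : closure_op v)
  {sigma : set (cmap u v) -> set (cmap u v)} (hsigma : closure_op sigma).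

Lemma cont_conv_uncurry_continuous {L : Type} {le : L -> L -> Prop} (hd : directed le)
  {s : L -> cmap u v} {f : cmap u v} :
  cont_conv u v le s f ->
  ccontinuous (prod_cl (limit_cl le) u) v (fun p => proj1_sig (with_limit s f (fst p)) (snd p)).
Proof.
  intros hsf.
  apply (continuous_of_net_conv (prod_cl_closure_op (limit_cl_closure_op hd) hu) hv).
  intros K leK hK p [z x] hp.
  pose proof (net_conv_fst hu hp) as hz.
  pose proof (net_conv_snd (limit_cl_closure_op hd) hp) as hx.
  intros V hV. destruct z as [l|]; simpl in hV.
  - destruct (eventually_and hK (hz _ (nbhd_Some l))
                (continuous_net_conv hv (proj2_sig (s l)) hx V hV)) as [k0 hk0].
    exists k0; intros k hk. destruct (hk0 k hk) as [hpk hVk]; simpl. rewrite hpk. exact hVk.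
  (* Eventually [fst (p k)] is [None], where [f] is continuous, or some [Some l]
     beyond [l0], where continuous convergence applies. *)
  - destruct (hsf K leK hK _ x hx V hV) as [[l0 k0] hcc].
    pose proof (continuous_net_conv hv (proj2_sig f) hx V hV) as hfx.
    pose proof (hz _ (nbhd_tail l0)) as htail.
    destruct (eventually_and hK (eventually_and hK hfx htail) (ex_intro _ k0 (fun k hk => hk)))
      as [k1 hk1].
    exists k1; intros k hk. destruct (hk1 k hk) as [[hfk htk] hk0k]; simpl.
    destruct (fst (p k)) as [l|]; simpl.
    + exact (hcc (l, k) (conj htk hk0k)).
    + exact hfk.
Qed.

Lemma proper_iff : proper u v sigma <-> cont_conv_implies_conv u v sigma.
Proof.
  split.
  - intros hproper L le hd s f hsf.
    apply (limit_cl_continuous_iff hsigma (with_limit s f)).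
    exact (hproper _ _ (limit_cl_closure_op hd) _ (with_limit s f) (fun _ _ => eq_refl)
             (cont_conv_uncurry_continuous hd hsf)).
  - intros hcc Z w hw g G hGg hg.
    assert (Eg : g = fun p => proj1_sig (G (fst p)) (snd p))
      by (apply functional_extensionality; intros [z x]; symmetry; apply hGg).
    subst g.
    apply (continuous_of_net_conv hw hsigma). intros L le hd zs z hz.
    apply (hcc _ _ hd). intros M leM hM xs x hx.
    exact (continuous_net_conv hv hg (net_conv_pair hz hx)).
Qed.

Lemma admissible_iff : admissible u v sigma <-> conv_implies_cont_conv u v sigma.
Proof.
  split.
  - intros hadm L le hd s f hsf M leM hM xs x hx.
    pose proof (proj2 (limit_cl_continuous_iff hsigma (with_limit s f)) hsf) as hG.
    pose proof (hadm _ _ (limit_cl_closure_op hd)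
                  (fun p => proj1_sig (with_limit s f (fst p)) (snd p)) _
                  (fun _ _ => eq_refl) hG) as hg.
    exact (continuous_net_conv hv hg (net_conv_pair net_conv_Some hx)).
  - intros hconv Z w hw g G hGg hG.
    assert (Eg : g = fun p => proj1_sig (G (fst p)) (snd p))
      by (apply functional_extensionality; intros [z x]; symmetry; apply hGg).
    subst g.
    apply (continuous_of_net_conv (prod_cl_closure_op hw hu) hv).
    intros K leK hK p [z x] hp.
    pose proof (continuous_net_conv hsigma hG (net_conv_fst hu hp)) as hGz.
    exact (net_conv_diag hK (hconv _ _ hK _ _ hGz _ _ hK _ _ (net_conv_snd hw hp))).
Qed.

End FunctionSpace.

Theorem theorem5 (X Y : Type) (u : set X -> set X) (v : set Y -> set Y)
  (hu : closure_op u) (hv : closure_op v)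
  (sigma : set (cmap u v) -> set (cmap u v)) (hsigma : closure_op sigma) :
  (proper u v sigma <->
    forall (L : Type) (le : L -> L -> Prop), directed le ->
    forall (s : L -> cmap u v) (f : cmap u v),
      cont_conv u v le s f -> net_conv sigma le s f)
  /\
  (admissible u v sigma <->
    forall (L : Type) (le : L -> L -> Prop), directed le ->
    forall (s : L -> cmap u v) (f : cmap u v),
      net_conv sigma le s f -> cont_conv u v le s f).
Proof.
  split.
  - exact (proper_iff hu hv hsigma).
  - exact (admissible_iff hu hv hsigma).
Qed.
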